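(* Let $G=(V,E)$ be a connected graph with $n$ vertices, $\tau$ a set of types with $|\tau|=2$, $f:\tau\to\mathbb{Q}_{\ge1}$ a fitness function, $\alpha\in\tau^+(f)$, and $D\in\mathcal D(G,\tau)$. Then $\pi_\alpha(G,\tau,f,D)\ge 1/n$.
   Context: $\tau^+(f)=\{i\in\tau: f(i)=\max_{j\in\tau}f(j)\}$. For $G=(V,E)$, $N(v)$ is the neighbourhood of $v$. $\Omega$ is the set of functions $V\to\tau$; for $S\in\Omega$, $S|_{v\to w}$ equals $S$ except $w$ gets type $S(v)$. The Moran process $M(G,\tau,f,M_0)$: Markov chain on $\Omega$ from $M_0$; given $M_t$, choose $v$ with probability $f(M_t(v))/\sum_uf(M_t(u))$, then $w\in N(v)$ uniformly, set $M_{t+1}=M_t|_{v\to w}$. $\pi_j(G,\tau,f,M_0)$ is the probability that eventually all vertices have type $j$, and $\pi_j(G,\tau,f,D)=\sum_{M_0}\Pr_D(M_0)\pi_j(G,\tau,f,M_0)$. With $k=|\tau|$, $V[k]$ is the set of $k$-tuples of distinct vertices, $\tau[k]$ the set of $k$-tuples of distinct types, $\Omega(\mathbf u,\boldsymbol\gamma)$ the set of states mapping the $i$-th entry of $\mathbf u$ to the $i$-th entry of $\boldsymbol\gamma$ for all $i$. $\mathcal D(G,\tau)$ is the set of distributions $D$ on $\Omega$ for which there are distributions $D_{\mathbf u,\boldsymbol\gamma}$ on $\Omega(\mathbf u,\boldsymbol\gamma)$ with $\Pr_D(S)=\frac{1}{|V[k]\times\tau[k]|}\sum_{(\mathbf u,\boldsymbol\gamma)\in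 V[k]\times\tau[k]}\Pr_{D_{\mathbf u,\boldsymbol\gamma}}(S)$ for all $S$. *)

From HB Require Import structures.
From mathcomp Require Import all_boot all_order all_algebra.
From mathcomp Require Import all_classical all_reals all_analysis.
Set Implicit Arguments. Unset Strict Implicit. Unset Printing Implicit Defensive.
Import Order.TTheory GRing.Theory Num.Theory.
Import numFieldNormedType.Exports.
Local Open Scope ring_scope.

Section Moran.
Variables (R : realType) (V T : finType).

Definition simple_graph (e : rel V) := symmetric e /\ irreflexive e.
Definition connected_graph (e : rel V) := forall x y : V, connect e x y.

Definition nbhd (e : rel V) (v : V) : {set V} := [set w | e v w].

Definition max_types (f : T -> rat) : {set T} :=
  [set i | [forall j, f j <= f i]].

Definition state := {ffun V -> T}.

Definition upd (S : state) (v w : V) : state :=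
  [ffun x => if x == w then S v else S x].

Definition fit (f : T -> rat) (i : T) : R := ratr (f i).

Definition total_fit (f : T -> rat) (S : state) : R := \sum_(u : V) fit f (S u).

Definition moran_P (e : rel V) (f : T -> rat) (S S' : state) : R :=
  \sum_(v : V) \sum_(w in nbhd e v)
     (S' == upd S v w)%:R * (fit f (S v) / total_fit f S) * (#|nbhd e v|%:R)^-1.

Definition moran_step (e : rel V) (f : T -> rat) (mu : state -> R) : state -> R :=
  fun S' => \sum_(S : state) mu S * moran_P e f S S'.

Definition moran_dist (e : rel V) (f : T -> rat) (D : state -> R) (t : nat) : state -> R :=
  iter t (moran_step e f) D.

Definition all_type (j : T) : state := [ffun _ => j].

(* pi_j(G,tau,f,D): probability that eventually all vertices have type j.
   Since the all-j state is absorbing, this is the limit of Pr[M_t = all j]. *)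
Definition fixation_prob (e : rel V) (f : T -> rat) (D : state -> R) (j : T) : R :=
  limn (fun t => moran_dist e f D t (all_type j)).

Definition is_distr (D : state -> R) :=
  (forall S, 0 <= D S) /\ \sum_(S : state) D S = 1.

Definition tuples_V (k : nat) : {set {ffun 'I_k -> V}} := [set u : {ffun 'I_k -> V} | injectiveb u].
Definition tuples_T (k : nat) : {set {ffun 'I_k -> T}} := [set g : {ffun 'I_k -> T} | injectiveb g].
Definition Omega_ug (k : nat) (u : {ffun 'I_k -> V}) (g : {ffun 'I_k -> T}) : {set state} :=
  [set S : state | [forall i, S (u i) == g i]].

Definition in_calD (D : state -> R) :=
  is_distr D /\
  exists Dfam : {ffun 'I_#|T| -> V} -> {ffun 'I_#|T| -> T} -> state -> R,
    (forall u g, u \in tuples_V #|T| -> g \in tuples_T #|T| ->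
        is_distr (Dfam u g) /\ (forall S, S \notin Omega_ug u g -> Dfam u g S = 0)) /\
    (forall S, D S = (#|tuples_V #|T| | * #|tuples_T #|T| |)%:R^-1 *
        \sum_(u in tuples_V #|T|) \sum_(g in tuples_T #|T|) Dfam u g S).

End Moran.

(* Give each vertex v the weight 1 / deg v, normalised to total 1, and let the
   potential of a state be the total weight of its alpha-vertices.  As e is
   symmetric, pairing each move v -> w with w -> v writes the one-step drift of
   the potential as a positive combination of the terms
   (f (S v) - f (S w)) ([S v = alpha] - [S w = alpha]), which are nonnegative
   because alpha has maximal fitness: the potential is a submartingale.  Under D
   the vertex carrying alpha is uniformly distributed, so the initial expected
   potential is at least the average weight 1 / n.  In a state where both kinds
   of vertices occur, connectivity gives an edge between them, so the squared
   potential increases in expectation by at least some c > 0; as it is bounded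
   by 1, the probabilities of such mixed states are summable over time.  Since
   the potential is at most [all alpha] + [mixed], letting t tend to infinity
   gives pi_alpha >= 1 / n. *)

From HB Require Import structures.
From mathcomp Require Import all_boot all_order all_algebra.
From mathcomp Require Import all_classical all_reals all_analysis.
From mathcomp Require Import perm ring lra.
Set Implicit Arguments.
Unset Strict Implicit.
Unset Printing Implicit Defensive.

Import Order.TTheory GRing.Theory Num.Theory.
Import numFieldNormedType.Exports.
Local Open Scope classical_set_scope.
Local Open Scope ring_scope.

Lemma limn_ge_of_summable_slack (R : realType) (p m : R ^nat) (a B : R) :
  nondecreasing_seq p -> has_ubound (range p) ->
  (forall t, 0 <= m t) -> (forall t, \sum_(s < t) m s <= B) ->
  (forall t, a <= p t + m t) -> a <= limn p.
Proof.
move=> p_nd p_ub m_ge0 m_sum slack.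
have p_cvg : cvgn p by exact: nondecreasing_is_cvgn.
have m_to0 : m @ \oo --> 0.
  apply: cvg_series_cvg_0; apply: nondecreasing_is_cvgn.
    by apply: nondecreasing_series => t _ _; exact: m_ge0.
  by exists B => _ [t _ <-]; rewrite /series /= big_mkord.
have pm_cvg : p + m @ \oo --> limn p + 0 by exact: cvgD.
rewrite -[limn p]addr0 -(cvg_lim _ pm_cvg) //.
by apply: limr_ge; [exact: cvgP pm_cvg | exact: nearW].
Qed.

Lemma fin_pos_lower_bound (R : realDomainType) (X : finType) (P : pred X)
    (q : X -> R) :
  (forall x, P x -> 0 < q x) -> exists2 c, 0 < c & forall x, P x -> c <= q x.
Proof.
move=> q_gt0; exists (\big[Num.min/1]_(x | P x) q x).
  by elim/big_ind: _ => // a b a_gt0 b_gt0; rewrite lt_min a_gt0 b_gt0.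
by move=> x Px; rewrite (bigD1 x) //= ge_min lexx.
Qed.

Lemma connect_boundary_edge (V : finType) (e : rel V) (P : pred V) x y :
  connect e x y -> P x -> ~~ P y -> exists v w, [&& e v w, P v & ~~ P w].
Proof.
move/connectP => [p e_p ->]; elim: p x e_p => [|z p IHp] x /= e_p Px.
  by rewrite Px.
move/andP: e_p => [exz e_p]; case Pz: (P z); first exact: IHp e_p Pz.
by exists x, z; rewrite exz Px Pz.
Qed.

Section InjectiveTuples.
Variables (R : realType) (V : finType) (k : nat) (i : 'I_k).

Lemma sum_tuples_entry_eq v v' :
  \sum_(u in tuples_V V k) ((u i == v)%:R : R) =
  \sum_(u in tuples_V V k) ((u i == v')%:R : R).
Proof.
pose swap (u : {ffun 'I_k -> V}) := [ffun j => tperm v v' (u j)].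
have swapK : involutive swap by move=> u; apply/ffunP => j; rewrite !ffunE tpermK.
rewrite (reindex_inj (inv_inj swapK)) /=; apply: eq_big => u.
  rewrite !inE; apply/injectiveP/injectiveP => u_inj x y.
    by move=> uxy; apply: u_inj; rewrite !ffunE uxy.
  by rewrite !ffunE => /perm_inj; exact: u_inj.
by move=> _; rewrite ffunE (canF_eq (tpermK v v')) tpermL.
Qed.

Lemma sum_tuples_entry (w : V -> R) :
  \sum_(u in tuples_V V k) w (u i) =
  #|tuples_V V k|%:R / #|V|%:R * \sum_v w v.
Proof.
have [V0 | V_gt0] := posnP #|V|.
  by rewrite big1 ?V0 ?invr0 ?mulr0 ?mul0r // => u; have := card0_eq V0 (u i).
pose cnt v := \sum_(u in tuples_V V k) ((u i == v)%:R : R).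
have entry_sum (g : V -> R) : \sum_(u in tuples_V V k) g (u i) = \sum_v g v * cnt v.
  under [RHS]eq_bigr do rewrite /cnt mulr_sumr.
  rewrite exchange_big /=; apply: eq_bigr => u _.
  rewrite (bigD1 (u i)) //= eqxx mulr1 big1 ?addr0 // => x /negbTE.
  by rewrite eq_sym => ->; rewrite mulr0.
have [v0 _] := card_gt0P V_gt0.
have cntE v : cnt v = cnt v0 by exact: sum_tuples_entry_eq.
have card_tuples : #|tuples_V V k|%:R = #|V|%:R * cnt v0 :> R.
  rewrite -sum1_card natr_sum (entry_sum (fun _ => 1)).
  by under eq_bigr do rewrite mul1r cntE; rewrite sumr_const mulr_natl.
rewrite entry_sum card_tuples [_ * cnt v0]mulrC mulfK ?pnatr_eq0 -?lt0n //.
by rewrite mulr_sumr; apply: eq_bigr => v _; rewrite cntE mulrC.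
Qed.

End InjectiveTuples.

Lemma in_calD_tuples_gt0 (R : realType) (V T : finType) (D : state V T -> R) :
  in_calD D -> (0 < #|tuples_V V #|T| | * #|tuples_T T #|T| |)%N.
Proof.
case=> [[_ D1] [Dfam [_ DE]]]; rewrite lt0n; apply: contra_eqN D1 => /eqP K0.
rewrite big1 => [|S _]; first by rewrite eq_sym oner_eq0.
by rewrite DE K0 invr0 mul0r.
Qed.

Section MoranChain.
Variables (R : realType) (V T : finType) (e : rel V) (f : T -> rat).
Hypothesis e_sym : symmetric e.
Hypothesis e_conn : connected_graph e.
Hypothesis V_gt1 : (1 < #|V|)%N.
Hypothesis f_gt0 : forall i, 0 < f i.

Local Notation state := (state V T).
Local Notation fitness := (fit R f).
Local Notation moran_P := (moran_P R e f).
Local Notation total_fit := (@total_fit R V T f).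

Definition deg v : R := #|nbhd e v|%:R.

Lemma deg_gt0 v : 0 < deg v.
Proof.
have /card_gt0P [w /= wv] : (0 < #|predC1 v|)%N by rewrite cardC1 -ltnS prednK // ltnW.
have /connectP [[|a p] /= e_p wE] := e_conn v w; first by rewrite wE !inE eqxx in wv.
by move/andP: e_p => [eva _]; rewrite ltr0n; apply/card_gt0P; exists a; rewrite inE.
Qed.

Lemma fit_gt0 i : 0 < fitness i.
Proof. by rewrite /fit ltr0q. Qed.

Lemma total_fit_gt0 S : 0 < total_fit S.
Proof.
have [v0 _] := card_gt0P (ltnW V_gt1).
rewrite /total_fit (bigD1 v0) //= ltr_wpDr ?fit_gt0 //.
by apply: sumr_ge0 => v _; exact/ltW/fit_gt0.
Qed.

Definition step_rate (S : state) v : R := fitness (S v) / total_fit S / deg v.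

Lemma step_rate_gt0 S v : 0 < step_rate S v.
Proof. by rewrite /step_rate 2?divr_gt0 ?fit_gt0 ?total_fit_gt0 ?deg_gt0. Qed.

Lemma sum_step_rate S : \sum_v \sum_(w | e v w) step_rate S v = 1.
Proof.
transitivity (\sum_v fitness (S v) / total_fit S).
  apply: eq_bigr => v _; rewrite sumr_const /step_rate.
  have -> : #|e v| = #|nbhd e v| by apply: eq_card => w; rewrite inE.
  by rewrite -mulr_natr -/(deg v) divfK // gt_eqF ?deg_gt0.
by rewrite -mulr_suml divff // gt_eqF ?total_fit_gt0.
Qed.

Definition next_mean (h : state -> R) S : R := \sum_S' moran_P S S' * h S'.

Lemma next_meanE h S :
  next_mean h S = \sum_v \sum_(w | e v w) step_rate S v * h (upd S v w).
Proof.
rewrite /next_mean /moran_P.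
under eq_bigr do rewrite big_distrl /=.
rewrite exchange_big; apply: eq_bigr => v _ /=.
under eq_bigr do rewrite big_distrl /=.
rewrite exchange_big /= (eq_bigl (e v)) => [|w]; last by rewrite inE.
apply: eq_bigr => w _; rewrite (bigD1 (upd S v w)) //= eqxx big1 ?addr0.
  by rewrite mul1r.
by move=> S' /negbTE ->; rewrite !mul0r.
Qed.

Lemma next_meanBE h S : next_mean h S - h S =
  \sum_v \sum_(w | e v w) step_rate S v * (h (upd S v w) - h S).
Proof.
rewrite next_meanE -[h S in LHS]mul1r -(sum_step_rate S) mulr_suml -sumrB.
apply: eq_bigr => v _; rewrite mulr_suml -sumrB.
by apply: eq_bigr => w _; rewrite mulrBr.
Qed.

Lemma next_mean_cst c S : next_mean (fun=> c) S = c.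
Proof.
apply/eqP; rewrite -subr_eq0 next_meanBE big1 // => v _.
by rewrite big1 // => w _; rewrite subrr mulr0.
Qed.

Lemma sum_edges_sym (G : V -> V -> R) :
  \sum_v \sum_(w | e v w) G v w = \sum_v \sum_(w | e v w) G w v.
Proof.
rewrite (exchange_big_dep predT) //=; apply: eq_bigr => v _.
by apply: eq_bigl => w; rewrite e_sym.
Qed.

Lemma moran_P_ge0 S S' : 0 <= moran_P S S'.
Proof.
apply: sumr_ge0 => v _; apply: sumr_ge0 => w _.
by rewrite -mulrA mulr_ge0 ?ler0n // ltW // step_rate_gt0.
Qed.

Lemma moran_P_all_type j : moran_P (all_type V j) (all_type V j) = 1.
Proof.
have all_typeK v w : upd (all_type V j) v w = all_type V j.
  by apply/ffunP => x; rewrite !ffunE; case: (x == w).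
transitivity (next_mean (fun S => (S == all_type V j)%:R) (all_type V j)).
  rewrite /next_mean (bigD1 (all_type V j)) //= eqxx mulr1 big1 ?addr0 //.
  by move=> S /negbTE ->; rewrite mulr0.
rewrite next_meanE -[RHS](sum_step_rate (all_type V j)).
by apply: eq_bigr => v _; apply: eq_bigr => w _; rewrite all_typeK eqxx mulr1.
Qed.

Definition expect (mu h : state -> R) : R := \sum_S mu S * h S.

Lemma ler_expect mu h1 h2 : (forall S, 0 <= mu S) -> (forall S, h1 S <= h2 S) ->
  expect mu h1 <= expect mu h2.
Proof. by move=> mu_ge0 h12; apply: ler_sum => S _; rewrite ler_wpM2l. Qed.

Lemma expectDZ mu g h c :
  expect mu (fun S => g S + c * h S) = expect mu g + c * expect mu h.
Proof. by rewrite /expect mulr_sumr -big_split; apply: eq_bigr => S _ /=; ring. Qed.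

Lemma expect_moran_step mu h : expect (moran_step e f mu) h = expect mu (next_mean h).
Proof.
rewrite /expect /moran_step /next_mean.
under eq_bigr do rewrite big_distrl /=.
rewrite exchange_big; apply: eq_bigr => S _.
by rewrite mulr_sumr; apply: eq_bigr => S' _; rewrite mulrA.
Qed.

Lemma moran_dist_ge0 (D : state -> R) t S :
  (forall S, 0 <= D S) -> 0 <= moran_dist e f D t S.
Proof.
move=> D_ge0; elim: t S => [|t IHt] S //=.
by apply: sumr_ge0 => S' _; rewrite mulr_ge0 ?moran_P_ge0.
Qed.

Lemma moran_dist_mass (D : state -> R) t : is_distr D -> \sum_S moran_dist e f D t S = 1.
Proof.
move=> [_ D1]; rewrite -D1; elim: t => [|t IHt] //.
have mass mu : \sum_S mu S = expect mu (fun=> 1) by apply: eq_bigr => S _; rewrite mulr1.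
rewrite mass /= expect_moran_step -IHt mass.
by apply: eq_bigr => S _; rewrite next_mean_cst.
Qed.

Variable alpha : T.
Hypothesis alpha_max : forall j, f j <= f alpha.

Definition deg_weight v : R := (deg v)^-1 / \sum_u (deg u)^-1.

Definition potential (S : state) : R := \sum_v (S v == alpha)%:R * deg_weight v.

Definition mixed (S : state) :=
  [exists v, S v == alpha] && [exists v, S v != alpha].

Lemma sum_inv_deg_gt0 : 0 < \sum_u (deg u)^-1.
Proof.
have [v0 _] := card_gt0P (ltnW V_gt1).
rewrite (bigD1 v0) //= ltr_wpDr ?invr_gt0 ?deg_gt0 //.
by apply: sumr_ge0 => u _; rewrite invr_ge0 ltW ?deg_gt0.
Qed.

Lemma deg_weight_gt0 v : 0 < deg_weight v.
Proof. by rewrite divr_gt0 ?invr_gt0 ?deg_gt0 ?sum_inv_deg_gt0. Qed.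

Lemma sum_deg_weight : \sum_v deg_weight v = 1.
Proof. by rewrite -mulr_suml divff // gt_eqF ?sum_inv_deg_gt0. Qed.

Lemma potential_ge0 S : 0 <= potential S.
Proof. by apply: sumr_ge0 => v _; rewrite mulr_ge0 ?ler0n ?ltW ?deg_weight_gt0. Qed.

Lemma potential_ge_deg_weight (S : state) v : S v = alpha -> deg_weight v <= potential S.
Proof.
move=> Sv; rewrite /potential (bigD1 v) //= Sv eqxx mul1r lerDl.
by apply: sumr_ge0 => u _; rewrite mulr_ge0 ?ler0n ?ltW ?deg_weight_gt0.
Qed.

Lemma potential_le1 S : potential S <= 1.
Proof.
rewrite -sum_deg_weight; apply: ler_sum => v _.
by case: (S v == alpha); rewrite ?mul1r ?mul0r // ltW ?deg_weight_gt0.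
Qed.

Lemma potential_upd S v w : potential (upd S v w) - potential S =
  deg_weight w * ((S v == alpha)%:R - (S w == alpha)%:R).
Proof.
rewrite /potential -sumrB (bigD1 w) //= big1 ?addr0.
  by rewrite ffunE eqxx -mulrBl mulrC.
by move=> x xw; rewrite ffunE (negbTE xw) subrr.
Qed.

Lemma potential_le_next_mean S : potential S <= next_mean potential S.
Proof.
rewrite -subr_ge0 next_meanBE.
under eq_bigr do under eq_bigr do rewrite potential_upd.
set X := (X in 0 <= X); suff : 0 <= X + X by lra.
rewrite [X in X + _]sum_edges_sym -big_split /=; apply: sumr_ge0 => v _.
rewrite -big_split /=; apply: sumr_ge0 => w _.
set a := (S v == alpha)%:R; set b := (S w == alpha)%:R.
have -> : step_rate S w * (deg_weight v * (b - a)) +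
    step_rate S v * (deg_weight w * (a - b)) =
  (total_fit S)^-1 * (deg v)^-1 * (deg w)^-1 / (\sum_u (deg u)^-1) *
    ((fitness (S v) - fitness (S w)) * (a - b)).
  by rewrite /step_rate /deg_weight; ring.
apply: mulr_ge0.
  rewrite ltW // divr_gt0 ?sum_inv_deg_gt0 //.
  by rewrite !mulr_gt0 ?invr_gt0 ?total_fit_gt0 ?deg_gt0.
have fit_le j : fitness j <= fitness alpha by rewrite ler_rat.
rewrite /a /b; case: (S v =P alpha) => [->|_]; case: (S w =P alpha) => [->|_];
  by rewrite ?subrr ?mulr0 ?subr0 ?mulr1 ?sub0r ?mulrN1 ?opprB ?subr_ge0.
Qed.

Lemma sq_potential_le_next_mean S :
  potential S ^+ 2 +
    \sum_v \sum_(w | e v w) step_rate S v * (potential (upd S v w) - potential S) ^+ 2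
  <= next_mean (fun S => potential S ^+ 2) S.
Proof.
rewrite addrC -lerBrDr next_meanBE.
have -> : \sum_v \sum_(w | e v w)
      step_rate S v * (potential (upd S v w) ^+ 2 - potential S ^+ 2) =
  \sum_v \sum_(w | e v w) step_rate S v * (potential (upd S v w) - potential S) ^+ 2 +
  2 * potential S * (next_mean potential S - potential S).
  rewrite next_meanBE mulr_sumr -big_split; apply: eq_bigr => v _.
  by rewrite mulr_sumr -big_split; apply: eq_bigr => w _ /=; ring.
by rewrite lerDl mulr_ge0 ?mulr_ge0 ?potential_ge0 // subr_ge0 potential_le_next_mean.
Qed.

Lemma sum_step_rate_sq_ge0 S (P : pred V) (d : V -> V -> R) :
  0 <= \sum_(v | P v) \sum_(w | e v w) step_rate S v * d v w ^+ 2.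
Proof.
apply: sumr_ge0 => v _; apply: sumr_ge0 => w _.
by rewrite mulr_ge0 ?sqr_ge0 ?ltW ?step_rate_gt0.
Qed.

Lemma mixed_sq_potential_lt_next_mean S :
  mixed S -> potential S ^+ 2 < next_mean (fun S => potential S ^+ 2) S.
Proof.
case/andP => /existsP [x Sx] /existsP [y Sy].
have [v [w /and3P [evw /eqP Sv Sw]]] :=
  connect_boundary_edge (P := fun z => S z == alpha) (e_conn x y) Sx Sy.
apply: lt_le_trans (sq_potential_le_next_mean S); rewrite ltrDl.
rewrite (bigD1 v) //= (bigD1 w) //= -addrA ltr_pwDl ?addr_ge0 //.
- rewrite potential_upd Sv eqxx (negbTE Sw) subr0 mulr1.
  by rewrite mulr_gt0 ?exprn_gt0 ?step_rate_gt0 ?deg_weight_gt0.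
- by apply: sumr_ge0 => u _; rewrite mulr_ge0 ?sqr_ge0 ?ltW ?step_rate_gt0.
- exact: sum_step_rate_sq_ge0.
Qed.

Lemma sq_potential_uniform_growth : exists2 c, 0 < c &
  forall S, potential S ^+ 2 + c * (mixed S)%:R <= next_mean (fun S => potential S ^+ 2) S.
Proof.
have [c c_gt0 c_le] : exists2 c, 0 < c & forall S,
    mixed S -> c <= next_mean (fun S => potential S ^+ 2) S - potential S ^+ 2.
  by apply: fin_pos_lower_bound => S /mixed_sq_potential_lt_next_mean; rewrite subr_gt0.
exists c => // S; case: (boolP (mixed S)) => [mS | _].
  by rewrite mulr1 addrC -lerBrDr c_le.
rewrite mulr0 addr0 (le_trans _ (sq_potential_le_next_mean S)) //.
by rewrite lerDl sum_step_rate_sq_ge0.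
Qed.

Lemma potential_le_all_or_mixed S :
  potential S <= (S == all_type V alpha)%:R + (mixed S)%:R.
Proof.
have [-> | not_all] := eqVneq S (all_type V alpha).
  by rewrite ler_wpDr ?ler0n ?potential_le1.
case: (boolP (mixed S)) => [_ | not_mixed]; first by rewrite add0r potential_le1.
rewrite add0r /potential big1 // => v _.
case: eqP => [Sv | _]; last by rewrite mul0r.
case/negP: not_mixed; apply/andP; split; first by apply/existsP; exists v; rewrite Sv.
apply: contraR not_all => /existsPn all_alpha.
by apply/eqP/ffunP => x; rewrite ffunE; apply/eqP/negbNE/all_alpha.
Qed.

Section Evolution.
Variable D : state -> R.
Hypothesis D_distr : is_distr D.

Local Notation mu t := (moran_dist e f D t).

Lemma mu_ge0 t S : 0 <= mu t S.
Proof. by apply: moran_dist_ge0; case: D_distr. Qed.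

Lemma expect_potential_init_le t : expect D potential <= expect (mu t) potential.
Proof.
elim: t => [|t IHt] //; apply: le_trans IHt _.
rewrite /= expect_moran_step ler_expect // => S.
  exact: mu_ge0.
exact: potential_le_next_mean.
Qed.

Lemma all_type_prob_nondecreasing : nondecreasing_seq (fun t => mu t (all_type V alpha)).
Proof.
apply/nondecreasing_seqP => t; rewrite [leRHS]/= /moran_step.
rewrite (bigD1 (all_type V alpha)) //= moran_P_all_type mulr1 lerDl.
by apply: sumr_ge0 => S _; rewrite mulr_ge0 ?mu_ge0 ?moran_P_ge0.
Qed.

Lemma all_type_prob_le1 t : mu t (all_type V alpha) <= 1.
Proof.
rewrite -(moran_dist_mass t D_distr) (bigD1 (all_type V alpha)) //= lerDl.
by apply: sumr_ge0 => S _; rewrite mu_ge0.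
Qed.

Lemma sum_mixed_prob_le c :
    (forall S, potential S ^+ 2 + c * (mixed S)%:R <=
      next_mean (fun S => potential S ^+ 2) S) ->
  forall t, c * \sum_(s < t) expect (mu s) (fun S => (mixed S)%:R) <= 1.
Proof.
move=> growth t; apply: (@le_trans _ _ (expect (mu t) (fun S => potential S ^+ 2))).
  elim: t => [|t IHt].
    by rewrite big_ord0 mulr0; apply: sumr_ge0 => S _; rewrite mulr_ge0 ?sqr_ge0 ?mu_ge0.
  rewrite big_ord_recr mulrDr /= (le_trans (lerD IHt (lexx _))) //.
  by rewrite -expectDZ expect_moran_step ler_expect // => S; rewrite mu_ge0.
rewrite -(moran_dist_mass t D_distr); apply: ler_sum => S _.
by rewrite ler_piMr ?mu_ge0 // expr_le1 ?potential_ge0 ?potential_le1.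
Qed.

Lemma expect_potential_le_fixation_prob : expect D potential <= fixation_prob e f D alpha.
Proof.
have [c c_gt0 growth] := sq_potential_uniform_growth.
apply: (limn_ge_of_summable_slack (m := fun t => expect (mu t) (fun S => (mixed S)%:R))
  (B := c^-1)) => [||t|t|t].
- exact: all_type_prob_nondecreasing.
- by exists 1 => _ [t _ <-]; exact: all_type_prob_le1.
- by apply: sumr_ge0 => S _; rewrite mulr_ge0 ?ler0n ?mu_ge0.
- by rewrite -(ler_pM2l c_gt0) mulfV ?gt_eqF ?sum_mixed_prob_le.
have -> : mu t (all_type V alpha) = expect (mu t) (fun S => (S == all_type V alpha)%:R).
  rewrite /expect (bigD1 (all_type V alpha)) //= eqxx mulr1 big1 ?addr0 //.
  by move=> S /negbTE ->; rewrite mulr0.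
rewrite -[X in _ + X]mul1r -expectDZ (le_trans (expect_potential_init_le t)) //.
by apply: ler_expect => S; rewrite ?mu_ge0 ?mul1r ?potential_le_all_or_mixed.
Qed.

End Evolution.

Lemma expect_potential_calD (D : state -> R) :
  in_calD D -> #|V|%:R^-1 <= expect D potential.
Proof.
move=> D_calD; have K_gt0 := in_calD_tuples_gt0 D_calD.
case: D_calD => _ [Dfam [Dfam_distr DE]].
set TV := tuples_V V #|T| in K_gt0 Dfam_distr DE *.
set TT := tuples_T T #|T| in K_gt0 Dfam_distr DE *.
have -> : expect D potential =
    (#|TV| * #|TT|)%:R^-1 * \sum_(g in TT) \sum_(u in TV) expect (Dfam u g) potential.
  rewrite /expect; under eq_bigr do rewrite DE -mulrA; rewrite -mulr_sumr; congr (_ * _).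
  under eq_bigr do (rewrite big_distrl /=; under eq_bigr do rewrite big_distrl /=).
  rewrite exchange_big /=; under eq_bigr do rewrite exchange_big /=.
  by rewrite exchange_big.
have tuple_bound g : g \in TT ->
    #|TV|%:R / #|V|%:R <= \sum_(u in TV) expect (Dfam u g) potential.
  move=> gT; have g_inj : injective g by move: gT; rewrite inE => /injectiveP.
  have card_range : (#|T| <= #|'I_#|T| |)%N by rewrite card_ord.
  have /codomP [i gi] := inj_card_onto g_inj card_range alpha.
  apply: (@le_trans _ _ (\sum_(u in TV) deg_weight (u i))).
    by rewrite sum_tuples_entry sum_deg_weight mulr1.
  apply: ler_sum => u uT.
  have [[Dug_ge0 Dug1] Dug_supp] := Dfam_distr u g uT gT.
  rewrite -[leLHS]mul1r -Dug1 mulr_suml; apply: ler_sum => S _.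
  case: (boolP (S \in Omega_ug u g)) => [/[!inE] /forallP /(_ i) /eqP Sui | S_out].
    by rewrite ler_wpM2l // potential_ge_deg_weight // Sui gi.
  by rewrite Dug_supp // !mul0r.
apply: le_trans (ler_wpM2l _ (ler_sum _ tuple_bound)); last by rewrite invr_ge0 ler0n.
have /andP [TV_gt0 TT_gt0] : (0 < #|TV|)%N && (0 < #|TT|)%N by rewrite -muln_gt0.
rewrite sumr_const -[_ *+ #|TT|]mulr_natl natrM [leRHS](_ : _ = #|V|%:R^-1) //.
by field; rewrite !pnatr_eq0 -!lt0n TV_gt0 TT_gt0 (ltn_trans _ V_gt1).
Qed.

End MoranChain.

Theorem lemma8 (R : realType) (V T : finType) (e : rel V) (f : T -> rat)
  (alpha : T) (D : state V T -> R) :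
  simple_graph e -> connected_graph e ->
  #|T| = 2%N ->
  (forall i : T, 1 <= f i) ->
  alpha \in max_types f ->
  in_calD D ->
  (#|V|%:R)^-1 <= fixation_prob e f D alpha.
Proof.
move=> [e_sym _] e_conn T2 f_ge1 /[!inE] /forallP alpha_max D_calD.
have V_gt1 : (1 < #|V|)%N.
  have := in_calD_tuples_gt0 D_calD; rewrite muln_gt0 => /andP [/card_gt0P [u]].
  by rewrite inE => /injectiveP /leq_card; rewrite card_ord T2.
have f_gt0 i : 0 < f i by exact: lt_le_trans ltr01 (f_ge1 i).
apply: le_trans (expect_potential_calD e_conn V_gt1 alpha D_calD) _.
by apply: expect_potential_le_fixation_prob => //; case: D_calD.
Qed.
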